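(* Let $\mathcal{U}(t):=2t\,\mathbb{E}\left[\log_+^2\left\{\frac{1+N_t}{t}\right\}\right]$ for $t>0$ (with $\mathcal{U}(0)=0$), where $N_t$ is a Poisson random variable with mean $t$ and $\log_+(u)=\max\{\log u,0\}$, and let $\mathcal{V}(t):=t\log^2\!\left(1+\frac{1}{\sqrt t}\right)$. Then $$\mathcal{U}(t)\le 2+\frac{2}{t}\ \text{ for all } t>0,\qquad \mathcal{U}(t)\le 2t\log^2\!\left(1+\frac1t\right)\ \text{ for all } t\in(0,e^{-1}].$$ In particular, $\mathcal{U}(t)\le 8$ and $\mathcal{U}(t)\le 21.5\,\mathcal{V}(t)$ for all $t\ge0$. *)

From Stdlib Require Import Reals Lra.
From Coquelicot Require Import Coquelicot.
Open Scope R_scope.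

Definition logp (u : R) : R := Rmax (ln u) 0.

Definition poisson_pmf (t : R) (k : nat) : R := exp (- t) * t ^ k / INR (Factorial.fact k).

Definition poisson_expect (t : R) (f : nat -> R) : R :=
  Series (fun k => poisson_pmf t k * f k).

Definition U (t : R) : R :=
  if Rlt_dec 0 t then
    2 * t * poisson_expect t (fun k => (logp ((1 + INR k) / t)) ^ 2)
  else 0.

Definition V (t : R) : R := t * (ln (1 + 1 / sqrt t)) ^ 2.

(* For u > 0 we have log_+^2 u <= u - 2 + 1/u: for u >= 1 put u = v^2 and use
   2 log v <= v - 1/v.  Averaging over u = (1 + N_t)/t with E[N_t] = t and
   E[1/(1 + N_t)] = (1 - e^{-t})/t gives U(t) <= 2 - 2 t e^{-t} <= 2.
   For t <= 1/e every value (1 + N_t)/t is at least e, where log^2 is concave;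
   its tangent line at the mean (1 + t)/t bounds it from above, and averaging
   the tangent line gives U(t) <= 2 t log^2 ((1 + t)/t) (Jensen).
   Finally log (1 + 1/t) <= 2 log (1 + 1/sqrt t) gives U <= 8 V for t <= 1/e,
   while V(t) >= 1/9 once t >= 1/4, which covers t > 1/e since U <= 2. *)

From Stdlib Require Import Reals Lra Lia.
From Coquelicot Require Import Coquelicot.
Open Scope R_scope.

Lemma MVT_on_ray (f df : R -> R) (a x y : R) :
  (forall z, a <= z -> is_derive f z (df z)) -> a <= x -> a <= y ->
  exists c, Rmin x y <= c <= Rmax x y /\ f y - f x = df c * (y - x).
Proof.
  intros Hd Hx Hy.
  assert (Hmin : a <= Rmin x y) by (apply Rmin_glb; assumption).
  apply MVT_gen.
  - intros z Hz. apply Hd. lra.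
  - intros z Hz. apply continuity_pt_filterlim, (ex_derive_continuous f).
    exists (df z). apply Hd. lra.
Qed.

Lemma nondecreasing_on_ray (f df : R -> R) (a : R) :
  (forall z, a <= z -> is_derive f z (df z)) -> (forall z, a <= z -> 0 <= df z) ->
  forall x y, a <= x -> x <= y -> f x <= f y.
Proof.
  intros Hd Hpos x y Hx Hxy.
  destruct (MVT_on_ray f df a x y Hd Hx ltac:(lra)) as [c [Hc E]].
  rewrite Rmin_left, Rmax_right in Hc by lra.
  assert (0 <= df c) by (apply Hpos; lra).
  nra.
Qed.

Lemma below_tangent_on_ray (f df : R -> R) (a c x : R) :
  (forall z, a <= z -> is_derive f z (df z)) ->
  (forall y z, a <= y -> y <= z -> df z <= df y) ->
  a <= c -> a <= x -> f x <= f c + df c * (x - c).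
Proof.
  intros Hd Hdecr Hc Hx.
  destruct (MVT_on_ray f df a c x Hd Hc Hx) as [d [Hdb E]].
  destruct (Rle_dec c x) as [Hcx | Hxc].
  - rewrite Rmin_left, Rmax_right in Hdb by lra.
    assert (df d <= df c) by (apply Hdecr; lra).
    nra.
  - rewrite Rmin_right, Rmax_left in Hdb by lra.
    assert (df c <= df d) by (apply Hdecr; lra).
    nra.
Qed.

Lemma two_ln_le_sub_inv (v : R) : 1 <= v -> 2 * ln v <= v - 1 / v.
Proof.
  intros Hv.
  enough (1 - 1 / 1 - 2 * ln 1 <= v - 1 / v - 2 * ln v) by (rewrite ln_1 in *; lra).
  apply (nondecreasing_on_ray (fun v => v - 1 / v - 2 * ln v)
           (fun v => (1 - 1 / v) ^ 2) 1); try lra.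
  - intros z Hz. auto_derive; [lra | field; lra].
  - intros z _. apply pow2_ge_0.
Qed.

Lemma ln_one_add_ge (x : R) : 0 <= x -> x / (1 + x) <= ln (1 + x).
Proof.
  intros Hx.
  assert (H := exp_ineq1_le (- (x / (1 + x)))).
  replace (1 + - (x / (1 + x))) with (/ (1 + x)) in H by (field; lra).
  apply ln_le in H; [|apply Rinv_0_lt_compat; lra].
  rewrite ln_exp, ln_Rinv in H by lra.
  lra.
Qed.

Lemma ln_sqr_below_tangent (c u : R) :
  exp 1 <= c -> exp 1 <= u -> ln u ^ 2 <= ln c ^ 2 + 2 * ln c / c * (u - c).
Proof.
  intros Hc Hu.
  assert (He := exp_pos 1).
  apply (below_tangent_on_ray (fun u => ln u ^ 2) (fun u => 2 * ln u / u) (exp 1));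
    try assumption.
  - intros z Hz. auto_derive; [lra | field; lra].
  - intros y z Hy Hyz.
    enough (- (2 * ln y / y) <= - (2 * ln z / z)) by lra.
    apply (nondecreasing_on_ray (fun u => - (2 * ln u / u))
             (fun u => 2 * (ln u - 1) / u ^ 2) (exp 1)); try assumption.
    + intros w Hw. auto_derive; [lra | field; lra].
    + intros w Hw.
      assert (1 <= ln w) by (rewrite <- (ln_exp 1); apply ln_le; assumption).
      apply Rle_mult_inv_pos; [lra | apply pow_lt; lra].
Qed.

Lemma logp_sqr_le (u : R) : 0 < u -> logp u ^ 2 <= u - 2 + 1 / u.
Proof.
  intros Hu. unfold logp.
  set (v := sqrt u).
  assert (Hvv : v * v = u) by (apply sqrt_sqrt; lra).
  assert (Hv : 0 < v) by (apply sqrt_lt_R0; lra).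
  replace (u - 2 + 1 / u) with ((v - 1 / v) ^ 2) by (rewrite <- Hvv; field; lra).
  destruct (Rle_dec 1 v) as [H1 | H1].
  - assert (Hln : ln u = 2 * ln v) by (rewrite <- Hvv, ln_mult by lra; ring).
    assert (0 <= ln v) by (rewrite <- ln_1; apply ln_le; lra).
    rewrite Rmax_left by lra.
    apply pow_incr. rewrite Hln. split; [lra | apply two_ln_le_sub_inv; exact H1].
  - assert (ln u <= 0) by (rewrite <- ln_1; apply ln_le; nra).
    rewrite Rmax_right by lra.
    replace (0 ^ 2) with 0 by ring. apply pow2_ge_0.
Qed.

Lemma exp_neg1 : exp (-1) = / exp 1.
Proof. rewrite <- exp_Ropp. reflexivity. Qed.

Section PoissonMoments.

Variable t : R.

Lemma poisson_pmf_S (k : nat) : poisson_pmf t (S k) = t * poisson_pmf t k / INR (S k).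
Proof.
  unfold poisson_pmf. rewrite fact_simpl, mult_INR. simpl pow.
  assert (INR (S k) <> 0) by (apply not_0_INR; lia).
  assert (INR (Factorial.fact k) <> 0) by apply INR_fact_neq_0.
  field. auto.
Qed.

Lemma poisson_pmf_gt0 (k : nat) : 0 < t -> 0 < poisson_pmf t k.
Proof.
  intros Ht. unfold poisson_pmf.
  apply Rdiv_lt_0_compat; [apply Rmult_lt_0_compat; [apply exp_pos | apply pow_lt; lra]|].
  apply lt_0_INR, Factorial.lt_O_fact.
Qed.

Lemma is_series_poisson_pmf : is_series (poisson_pmf t) 1.
Proof.
  assert (H := is_series_scal_l (exp (- t)) _ _ (is_exp_Reals t)).
  replace 1 with (exp (- t) * exp t) by (rewrite <- exp_plus, Rplus_opp_l; apply exp_0).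
  eapply is_series_ext; [|exact H]. intros n.
  unfold poisson_pmf, scal; simpl; unfold mult; simpl.
  rewrite pow_n_pow. field. apply INR_fact_neq_0.
Qed.

Lemma is_series_poisson_mean : is_series (fun k => poisson_pmf t k * INR k) t.
Proof.
  apply is_series_decr_1.
  match goal with |- is_series _ ?l => replace l with (t * 1) by (unfold plus, opp; simpl; ring) end.
  eapply is_series_ext; [|exact (is_series_scal_l t _ _ is_series_poisson_pmf)].
  intros n. rewrite poisson_pmf_S, S_INR.
  unfold scal; simpl; unfold mult; simpl.
  assert (0 <= INR n) by apply pos_INR. field. lra.
Qed.

Lemma is_series_poisson_inv_succ :
  0 < t -> is_series (fun k => poisson_pmf t k / (1 + INR k)) ((1 - exp (- t)) / t).
Proof.
  intros Ht.
  assert (Htail : is_series (fun k => poisson_pmf t (S k)) (1 - exp (- t))).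
  { apply is_series_incr_1.
    match goal with |- is_series _ ?l => replace l with 1 end;
      [exact is_series_poisson_pmf | unfold plus, poisson_pmf; simpl; field]. }
  replace ((1 - exp (- t)) / t) with (/ t * (1 - exp (- t))) by (field; lra).
  eapply is_series_ext; [|exact (is_series_scal_l (/ t) _ _ Htail)].
  intros n. unfold scal; simpl; unfold mult; simpl.
  rewrite poisson_pmf_S, S_INR.
  assert (0 <= INR n) by apply pos_INR. field. lra.
Qed.

Lemma is_series_poisson_affine (a b : R) :
  is_series (fun k => poisson_pmf t k * (a + b * (INR k - t))) a.
Proof.
  assert (H := is_series_plus _ _ _ _
                 (is_series_scal_l (a - b * t) _ _ is_series_poisson_pmf)
                 (is_series_scal_l b _ _ is_series_poisson_mean)).
  unfold plus, scal in H; simpl in H; unfold mult, plus in H; simpl in H.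
  replace ((a - b * t) * 1 + b * t) with a in H by ring.
  eapply is_series_ext; [|exact H]. intros n; simpl. ring.
Qed.

Lemma poisson_expect_le (f g : nat -> R) (l : R) :
  0 < t -> (forall k, 0 <= f k <= g k) ->
  is_series (fun k => poisson_pmf t k * g k) l -> poisson_expect t f <= l.
Proof.
  intros Ht Hfg Hg. unfold poisson_expect.
  rewrite <- (is_series_unique _ _ Hg).
  apply Series_le; [|exists l; exact Hg].
  intros k. destruct (Hfg k). assert (0 < poisson_pmf t k) by (apply poisson_pmf_gt0; exact Ht).
  split; [apply Rmult_le_pos | apply Rmult_le_compat_l]; lra.
Qed.

Lemma is_series_poisson_ratio_sum :
  0 < t ->
  is_series (fun k => poisson_pmf t k * ((1 + INR k) / t - 2 + t / (1 + INR k)))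
    (1 / t - exp (- t)).
Proof.
  intros Ht.
  assert (H := is_series_plus _ _ _ _
                 (is_series_plus _ _ _ _
                    (is_series_scal_l (1 / t - 2) _ _ is_series_poisson_pmf)
                    (is_series_scal_l (1 / t) _ _ is_series_poisson_mean))
                 (is_series_scal_l t _ _ (is_series_poisson_inv_succ Ht))).
  unfold plus, scal in H; simpl in H; unfold mult, plus in H; simpl in H.
  match type of H with is_series _ ?l =>
    replace l with (1 / t - exp (- t)) in H by (field; lra) end.
  eapply is_series_ext; [|exact H]. intros n; simpl.
  assert (0 <= INR n) by apply pos_INR. field. lra.
Qed.

End PoissonMoments.

Lemma U_nonpos (t : R) : t <= 0 -> U t = 0.
Proof. intros Ht. unfold U. destruct (Rlt_dec 0 t); [lra | reflexivity]. Qed.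

Lemma U_le_two_sub (t : R) : 0 < t -> U t <= 2 - 2 * t * exp (- t).
Proof.
  intros Ht. unfold U. destruct (Rlt_dec 0 t) as [_ | ]; [|lra].
  assert (HE : poisson_expect t (fun k => logp ((1 + INR k) / t) ^ 2) <= 1 / t - exp (- t)).
  { eapply poisson_expect_le; [exact Ht | | exact (is_series_poisson_ratio_sum t Ht)].
    intros k. assert (0 <= INR k) by apply pos_INR.
    split; [apply pow2_ge_0|].
    replace (t / (1 + INR k)) with (1 / ((1 + INR k) / t)) by (field; lra).
    apply logp_sqr_le, Rdiv_lt_0_compat; lra. }
  replace (2 - 2 * t * exp (- t)) with (2 * t * (1 / t - exp (- t))) by (field; lra).
  apply Rmult_le_compat_l; lra.
Qed.

Lemma U_le_two (t : R) : U t <= 2.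
Proof.
  destruct (Rle_dec t 0) as [Ht | Ht].
  - rewrite U_nonpos by exact Ht. lra.
  - assert (U t <= 2 - 2 * t * exp (- t)) by (apply U_le_two_sub; lra).
    assert (0 < t * exp (- t)) by (apply Rmult_lt_0_compat; [lra | apply exp_pos]).
    lra.
Qed.

Lemma exp1_le_inv (t : R) : 0 < t -> t <= exp (-1) -> exp 1 <= / t.
Proof.
  intros Ht He. rewrite exp_neg1 in He.
  rewrite <- (Rinv_inv (exp 1)).
  apply Rinv_le_contravar; assumption.
Qed.

Lemma U_le_small (t : R) :
  0 < t -> t <= exp (-1) -> U t <= 2 * t * ln (1 + 1 / t) ^ 2.
Proof.
  intros Ht He. unfold U. destruct (Rlt_dec 0 t) as [_ | ]; [|lra].
  assert (Hinv := exp1_le_inv t Ht He).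
  assert (He1 := exp_ineq1_le 1).
  set (a := ln ((1 + t) / t)).
  replace (1 + 1 / t) with ((1 + t) / t) by (field; lra). fold a.
  apply Rmult_le_compat_l; [lra|].
  eapply poisson_expect_le;
    [exact Ht | | exact (is_series_poisson_affine t (a ^ 2) (2 * a / (1 + t)))].
  intros k. assert (0 <= INR k) by apply pos_INR.
  assert (Hu : exp 1 <= (1 + INR k) / t).
  { apply Rle_trans with (/ t); [exact Hinv|].
    apply Rmult_le_reg_l with t; [lra|]. field_simplify; lra. }
  assert (Hc : exp 1 <= (1 + t) / t).
  { apply Rle_trans with (/ t); [exact Hinv|].
    apply Rmult_le_reg_l with t; [lra|]. field_simplify; lra. }
  unfold logp. rewrite Rmax_left by (rewrite <- ln_1; apply ln_le; lra).
  split; [apply pow2_ge_0|].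
  replace (a ^ 2 + 2 * a / (1 + t) * (INR k - t))
    with (a ^ 2 + 2 * a / ((1 + t) / t) * ((1 + INR k) / t - (1 + t) / t)) by (field; lra).
  apply ln_sqr_below_tangent; assumption.
Qed.

Lemma ln_one_add_inv_le (t : R) : 0 < t -> ln (1 + 1 / t) <= 2 * ln (1 + 1 / sqrt t).
Proof.
  intros Ht.
  set (r := sqrt t).
  assert (Hr : r * r = t) by (apply sqrt_sqrt; lra).
  assert (Hr0 : 0 < r) by (apply sqrt_lt_R0; exact Ht).
  assert (Hx : 0 < 1 / r) by (apply Rdiv_lt_0_compat; lra).
  replace (2 * ln (1 + 1 / r)) with (ln ((1 + 1 / r) * (1 + 1 / r)))
    by (rewrite ln_mult by lra; ring).
  apply ln_le; [apply Rplus_lt_le_0_compat; [lra | apply Rlt_le, Rdiv_lt_0_compat; lra]|].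
  replace ((1 + 1 / r) * (1 + 1 / r)) with (1 + 1 / t + 2 * (1 / r))
    by (rewrite <- Hr; field; lra).
  lra.
Qed.

Lemma U_le_8V_small (t : R) : 0 < t -> t <= exp (-1) -> U t <= 8 * V t.
Proof.
  intros Ht He. unfold V.
  assert (Hl := ln_one_add_inv_le t Ht).
  assert (0 <= ln (1 + 1 / t))
    by (rewrite <- ln_1; apply ln_le; [lra | assert (0 < 1 / t) by (apply Rdiv_lt_0_compat; lra); lra]).
  assert (ln (1 + 1 / t) ^ 2 <= (2 * ln (1 + 1 / sqrt t)) ^ 2) by (apply pow_incr; lra).
  assert (U t <= 2 * t * ln (1 + 1 / t) ^ 2) by (apply U_le_small; assumption).
  nra.
Qed.

Lemma V_ge_ninth (t : R) : / 4 <= t -> / 9 <= V t.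
Proof.
  intros Ht. unfold V.
  set (r := sqrt t). set (x := 1 / r).
  assert (Hs : r * r = t) by (apply sqrt_sqrt; lra).
  assert (Hs0 : 0 < r) by (apply sqrt_lt_R0; lra).
  assert (Hx0 : 0 < x) by (apply Rdiv_lt_0_compat; lra).
  assert (Hx2 : x <= 2).
  { unfold x. apply Rmult_le_reg_r with r; [exact Hs0|].
    field_simplify; [nra | lra]. }
  assert (Hl := ln_one_add_ge x ltac:(lra)).
  assert (Hq : 0 <= x / (1 + x)) by (apply Rle_mult_inv_pos; lra).
  assert ((x / (1 + x)) ^ 2 <= ln (1 + x) ^ 2) by (apply pow_incr; lra).
  assert (E : t * (x / (1 + x)) ^ 2 = / (1 + x) ^ 2) by (unfold x; rewrite <- Hs; field; lra).
  assert (/ 9 <= / (1 + x) ^ 2) by (apply Rinv_le_contravar; [apply pow_lt |]; nra).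
  assert (t * (x / (1 + x)) ^ 2 <= t * ln (1 + x) ^ 2) by (apply Rmult_le_compat_l; lra).
  lra.
Qed.

Theorem lemma4 :
  (forall t : R, 0 < t -> U t <= 2 + 2 / t) /\
  (forall t : R, 0 < t -> t <= exp (-1) -> U t <= 2 * t * (ln (1 + 1 / t)) ^ 2) /\
  (forall t : R, 0 <= t -> U t <= 8) /\
  (forall t : R, 0 <= t -> U t <= 21.5 * V t).
Proof.
  split; [|split; [|split]].
  - intros t Ht. assert (0 < 2 / t) by (apply Rdiv_lt_0_compat; lra).
    assert (HU := U_le_two t). lra.
  - exact U_le_small.
  - intros t _. assert (HU := U_le_two t). lra.
  - intros t Ht.
    destruct (Req_dec t 0) as [-> | Ht0].
    { rewrite U_nonpos by lra. unfold V. lra. }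
    destruct (Rle_dec t (exp (-1))) as [He | He].
    + assert (HU := U_le_8V_small t ltac:(lra) He).
      assert (0 <= V t) by (apply Rmult_le_pos; [lra | apply pow2_ge_0]).
      lra.
    + assert (H3 : / 3 <= exp (-1))
        by (rewrite exp_neg1; apply Rinv_le_contravar; [apply exp_pos | exact exp_le_3]).
      assert (HV := V_ge_ninth t ltac:(lra)).
      assert (HU := U_le_two t). lra.
Qed.
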